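(* Let $\|\cdot\|$ be a norm on $\mathbb{C}^n$. There exists a sequence, indexed by positive integers $d$, of functions \[F_{2d}(z):=\sum_{i=1}^{N(2d)} w_i |\langle z,y_i\rangle|^{2d},\] with $N(2d)\in\mathbb{N}$, points $y_i\in\mathbb{C}^n$ and real positive weights $w_i$, such that: (1) $n_{2d}(z):=F_{2d}(z)^{1/(2d)}$ is a norm on $\mathbb{C}^n$; (2) $n_{2d}(z)\leq\|z\|$ for all $z\in\mathbb{C}^n$; (3) $n_{2d}(z)$ converges to $\|z\|$ as $d\to\infty$, uniformly on compact subsets of $\mathbb{C}^n$.
   Context: A norm on $\mathbb{C}^n$ is a complex norm, i.e. it satisfies $\|\lambda z\|=|\lambda|\|z\|$ for all complex $\lambda$. $\langle z,y\rangle$ denotes the standard Hermitian inner product on $\mathbb{C}^n$. *)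

From HB Require Import structures.
From mathcomp Require Import all_boot all_order all_algebra.
From mathcomp Require Import all_classical all_reals all_analysis.
From mathcomp Require Import complex.
Import Order.TTheory GRing.Theory Num.Theory numFieldTopology.Exports numFieldNormedType.Exports.
Local Open Scope ring_scope.

(* Equip C = R[i] with MathComp-Analysis's standard topology of a numFieldType
   (the metric topology of the complex modulus); 'rV[R[i]]_n then carries the
   product topology, i.e. the usual Euclidean topology of C^n. *)
HB.instance Definition _ (R : realType) := PseudoPointedMetric.copy R[i] R[i]^o.

Set Implicit Arguments. Unset Strict Implicit. Unset Printing Implicit Defensive.

Definition cmod (R : realType) (z : R[i]) : R := Normc.normc z.

Definition hinner (R : realType) (n : nat) (z y : 'rV[R[i]]_n) : R[i] :=
  \sum_(k < n) z ord0 k * (y ord0 k)^*%C.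

Definition is_cnorm (R : realType) (n : nat) (nu : 'rV[R[i]]_n -> R) : Prop :=
  [/\ (forall z, 0 <= nu z),
      (forall z, nu z = 0 -> z = 0),
      (forall (l : R[i]) z, nu (l *: z) = cmod l * nu z) &
      (forall z y, nu (z + y) <= nu z + nu y)].

Definition Fsum (R : realType) (n N : nat) (w : 'I_N -> R)
  (y : 'I_N -> 'rV[R[i]]_n) (d : nat) (z : 'rV[R[i]]_n) : R :=
  \sum_(i < N) w i * cmod (hinner z (y i)) ^+ (2 * d).

Definition nroot (R : realType) (n N : nat) (w : 'I_N -> R)
  (y : 'I_N -> 'rV[R[i]]_n) (d : nat) (z : 'rV[R[i]]_n) : R :=
  powR (Fsum w y d z) ((2 * d)%:R)^-1.

(* For 0 < a < 1, every z has a dual vector y with |<x, y>| <= ||x|| for all x and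
   |<z, y>| > a ||z||: project (1 + t) z / ||z|| Euclideanly onto the unit ball of
   ||.|| and take the normal of the separating hyperplane.  Compactness of the unit
   sphere then yields finitely many such y_1, ..., y_N that work for all z, so that
   F(z) = N^-1 sum_i |<z, y_i>|^(2d) satisfies (a ||z||)^(2d) / N <= F(z) <= ||z||^(2d),
   and F^(1/(2d)) is a norm by Minkowski's inequality.  With a = (k+1)/(k+2) and
   d >= N (k+1), Bernoulli's inequality gives N^(-1/(2d)) >= a, whence
   ||z|| - F(z)^(1/(2d)) <= 2 ||z|| / (k+2); letting k grow slowly with d gives
   uniform convergence on compact sets. *)

From mathcomp Require Import all_boot all_order all_algebra.
From mathcomp Require Import all_classical all_reals all_analysis.
From mathcomp Require Import complex ring lra zify.
Import Order.TTheory GRing.Theory Num.Theory numFieldTopology.Exports numFieldNormedType.Exports.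
Local Open Scope ring_scope.
Local Open Scope complex_scope.
Local Open Scope classical_set_scope.

Section ComplexModulus.
Context {R : realType}.
Implicit Types (x y z : R[i]) (k : R).

Lemma cmodE z : cmod z = Num.sqrt (complex.Re z ^+ 2 + complex.Im z ^+ 2).
Proof. by case: z. Qed.

Lemma cmod_ge0 z : 0 <= cmod z.
Proof. by rewrite cmodE sqrtr_ge0. Qed.

Lemma cmod0 : cmod (0 : R[i]) = 0.
Proof. exact: Normc.normc0. Qed.

Lemma cmod1 : cmod (1 : R[i]) = 1.
Proof. exact: Normc.normc1. Qed.

Lemma cmod_eq0 z : cmod z = 0 -> z = 0.
Proof. exact: Normc.eq0_normc. Qed.

Lemma cmodM x y : cmod (x * y) = cmod x * cmod y.
Proof. exact: Normc.normcM. Qed.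

Lemma ler_cmodD x y : cmod (x + y) <= cmod x + cmod y.
Proof. exact: le_normcD. Qed.

Lemma cmodN x : cmod (- x) = cmod x.
Proof. exact: normcN. Qed.

Lemma cmodJ x : cmod x^* = cmod x.
Proof. by case: x => a b; rewrite /cmod /= sqrrN. Qed.

Lemma cmodR k : cmod k%:C = `|k|.
Proof. by rewrite cmodE /= expr0n addr0 sqrtr_sqr. Qed.

Lemma cmod_sqr z : cmod z ^+ 2 = complex.Re z ^+ 2 + complex.Im z ^+ 2.
Proof. by rewrite cmodE sqr_sqrtr // addr_ge0 // sqr_ge0. Qed.

Lemma ler_Re_cmod z : `|complex.Re z| <= cmod z.
Proof.
rewrite -ler_sqr ?nnegrE ?cmod_ge0 // real_normK ?num_real // cmod_sqr.
by rewrite lerDl sqr_ge0.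
Qed.

Lemma ler_Im_cmod z : `|complex.Im z| <= cmod z.
Proof.
rewrite -ler_sqr ?nnegrE ?cmod_ge0 // real_normK ?num_real // cmod_sqr.
by rewrite lerDr sqr_ge0.
Qed.

Lemma mulcJ z : z * z^* = (cmod z ^+ 2)%:C.
Proof.
case: z => a b; rewrite cmod_sqr; apply/eqP; rewrite eq_complex /=.
by apply/andP; split; apply/eqP; ring.
Qed.

Lemma ler_cmod_dist x y : `|cmod x - cmod y| <= cmod (x - y).
Proof.
have cmodBl (u v : R[i]) : cmod u - cmod v <= cmod (u - v).
  by rewrite lerBlDr (le_trans _ (ler_cmodD _ _)) // subrK.
by rewrite ler_norml cmodBl andbT lerNl opprB -[cmod (x - y)]cmodN opprB cmodBl.
Qed.

Lemma ler_cmod_Complex k k' : cmod (k +i* k') <= `|k| + `|k'|.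
Proof.
have -> : k +i* k' = k%:C + (0 +i* k').
  by apply/eqP; rewrite eq_complex /= addr0 add0r !eqxx.
by rewrite -cmodR (le_trans (ler_cmodD _ _)) // lerD2l cmodE /= expr0n add0r sqrtr_sqr.
Qed.

End ComplexModulus.

Section HermitianProduct.
Context {R : realType} {n : nat}.
Implicit Types x y : 'rV[R[i]]_n.

Lemma hinnerDl x x' y : hinner (x + x') y = hinner x y + hinner x' y.
Proof. by rewrite /hinner -big_split; apply: eq_bigr => k _; rewrite mxE mulrDl. Qed.

Lemma hinnerZl l x y : hinner (l *: x) y = l * hinner x y.
Proof. by rewrite /hinner mulr_sumr; apply: eq_bigr => k _; rewrite mxE mulrA. Qed.

Lemma hinnerBl x x' y : hinner (x - x') y = hinner x y - hinner x' y.
Proof. by rewrite -scaleN1r hinnerDl hinnerZl mulN1r. Qed.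

Lemma hinner0r x : hinner x 0 = 0.
Proof. by rewrite /hinner big1 // => k _; rewrite mxE conjc0 mulr0. Qed.

Definition rdot x y : R := \sum_(k < n)
  (complex.Re (x ord0 k) * complex.Re (y ord0 k) + complex.Im (x ord0 k) * complex.Im (y ord0 k)).

Lemma Re_hinner x y : complex.Re (hinner x y) = rdot x y.
Proof.
have ReD (u v : R[i]) : complex.Re (u + v) = complex.Re u + complex.Re v by case: u; case: v.
rewrite /hinner /rdot (big_morph _ ReD (erefl : complex.Re (0 : R[i]) = 0)).
by apply: eq_bigr => k _; case: (x ord0 k) => a b; case: (y ord0 k) => c d /=; ring.
Qed.

Lemma rdotDl x x' y : rdot (x + x') y = rdot x y + rdot x' y.
Proof.
rewrite /rdot -big_split; apply: eq_bigr => k _; rewrite !mxE.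
by case: (x ord0 k) => a b; case: (x' ord0 k) => c d /=; ring.
Qed.

Lemma rdotZl (s : R) x y : rdot (s%:C *: x) y = s * rdot x y.
Proof.
rewrite /rdot mulr_sumr; apply: eq_bigr => k _; rewrite !mxE.
by case: (x ord0 k) => a b /=; ring.
Qed.

Lemma rdotNl x y : rdot (- x) y = - rdot x y.
Proof.
rewrite /rdot -sumrN; apply: eq_bigr => k _; rewrite !mxE.
by case: (x ord0 k) => a b /=; ring.
Qed.

Lemma rdotZr (s : R) x y : rdot x (s%:C *: y) = s * rdot x y.
Proof.
rewrite /rdot mulr_sumr; apply: eq_bigr => k _; rewrite !mxE.
by case: (y ord0 k) => a b /=; ring.
Qed.

Lemma rdot0l y : rdot 0 y = 0.
Proof. by rewrite /rdot big1 // => k _; rewrite mxE /= !mul0r addr0. Qed.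

Definition sqnorm x : R := \sum_(k < n) cmod (x ord0 k) ^+ 2.

Lemma rdotxx x : rdot x x = sqnorm x.
Proof. by apply: eq_bigr => k _; rewrite cmod_sqr !expr2. Qed.

Lemma sqnorm_ge0 x : 0 <= sqnorm x.
Proof. by apply: sumr_ge0 => k _; exact: sqr_ge0. Qed.

Lemma sqnorm_eq0 x : sqnorm x = 0 -> x = 0.
Proof.
move/eqP; rewrite psumr_eq0; last by move=> k _; exact: sqr_ge0.
move=> /allP x0; apply/rowP => k; rewrite mxE; apply: cmod_eq0.
by apply/eqP; rewrite -sqrf_eq0; apply: x0; rewrite mem_index_enum.
Qed.

Lemma sqnormBZ x y (s : R) :
  sqnorm (x - s%:C *: y) = sqnorm x - 2 * s * rdot y x + s ^+ 2 * sqnorm y.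
Proof.
rewrite /sqnorm /rdot !mulr_sumr -sumrB -big_split /=.
apply: eq_bigr => k _; rewrite !mxE !cmod_sqr.
by case: (x ord0 k) => a b; case: (y ord0 k) => c d /=; ring.
Qed.

End HermitianProduct.

Section L1Norm.
Context {R : realType} {n : nat}.
Implicit Types x y : 'rV[R[i]]_n.

Definition l1norm x : R := \sum_(k < n) cmod (x ord0 k).

Lemma l1norm_ge0 x : 0 <= l1norm x.
Proof. by apply: sumr_ge0 => k _; exact: cmod_ge0. Qed.

Lemma l1norm_eq0 x : l1norm x = 0 -> x = 0.
Proof.
move/eqP; rewrite psumr_eq0; last by move=> k _; exact: cmod_ge0.
move=> /allP x0; apply/rowP => k; rewrite mxE; apply: cmod_eq0.
by apply/eqP; apply: x0; rewrite mem_index_enum.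
Qed.

Lemma l1normZ l x : l1norm (l *: x) = cmod l * l1norm x.
Proof. by rewrite /l1norm mulr_sumr; apply: eq_bigr => k _; rewrite mxE cmodM. Qed.

Lemma l1normN x : l1norm (- x) = l1norm x.
Proof. by rewrite -scaleN1r l1normZ cmodN cmod1 mul1r. Qed.

Lemma ler_l1normD x y : l1norm (x + y) <= l1norm x + l1norm y.
Proof.
rewrite /l1norm -big_split /=; apply: ler_sum => k _; rewrite mxE; exact: ler_cmodD.
Qed.

Lemma ler_l1norm_dist x y : `|l1norm x - l1norm y| <= l1norm (x - y).
Proof.
have l1normBl u v : l1norm u - l1norm v <= l1norm (u - v).
  by rewrite lerBlDr (le_trans _ (ler_l1normD _ _)) // subrK.
rewrite ler_norml l1normBl andbT lerNl opprB -[l1norm (x - y)]l1normN opprB.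
exact: l1normBl.
Qed.

Lemma ler_coord_l1norm x k : cmod (x ord0 k) <= l1norm x.
Proof.
by rewrite /l1norm (bigD1 k) //= lerDl; apply: sumr_ge0 => j _; exact: cmod_ge0.
Qed.

Lemma ler_cmod_hinner x y : cmod (hinner x y) <= l1norm x * l1norm y.
Proof.
rewrite /hinner /l1norm mulr_suml.
elim/big_ind2: _ => [|a b c d ba dc|k _]; first by rewrite cmod0.
  exact: le_trans (ler_cmodD _ _) (lerD ba dc).
rewrite cmodM cmodJ ler_wpM2l ?cmod_ge0 //; exact: ler_coord_l1norm.
Qed.

Lemma ler_l1norm_sqnorm x : l1norm x <= n%:R * (1 + sqnorm x).
Proof.
rewrite -[n in n%:R]card_ord mulr_natl -sumr_const /l1norm.
apply: ler_sum => k _; have xk0 := cmod_ge0 (x ord0 k).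
have : cmod (x ord0 k) ^+ 2 <= sqnorm x.
  by rewrite /sqnorm (bigD1 k) //= lerDl; apply: sumr_ge0 => j _; exact: sqr_ge0.
rewrite expr2; nra.
Qed.

Lemma nbhs_rV_coord x0 (A : set 'rV[R[i]]_n) (r : R) :
  0 < r -> (forall x, (forall k, cmod (x0 ord0 k - x ord0 k) < r) -> A x) -> nbhs x0 A.
Proof.
move=> r0 rA; apply/nbhs_ballP; exists r%:C; first by rewrite /= ltcR.
move=> x [_ x0x]; apply: rA => k; move: (x0x ord0 k).
by rewrite /ball /= normc_def ltcR -cmodE.
Qed.

Lemma l1norm_lipschitz_continuous (f : 'rV[R[i]]_n -> R) x0 (C : R) : 0 <= C ->
  (forall x, l1norm (x - x0) <= 1 -> `|f x - f x0| <= C * l1norm (x - x0)) ->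
  {for x0, continuous f}.
Proof.
move=> C0 fC P /nbhs_ballP [e /= e0 eP].
pose r := Num.min 1 (e / (C + 1)).
have r0 : 0 < r by rewrite lt_min ltr01 divr_gt0 // ltr_wpDl.
have r1 : r <= 1 by rewrite ge_min lexx.
have re : r <= e / (C + 1) by rewrite ge_min lexx orbT.
apply: (@nbhs_rV_coord _ _ (r / n.+1%:R)); first by rewrite divr_gt0.
move=> x x0x; apply: eP.
have xr : l1norm (x - x0) <= r.
  apply: (@le_trans _ _ (\sum_(k < n) (r / n.+1%:R))).
    by apply: ler_sum => k _; rewrite !mxE -cmodN opprB; exact: ltW.
  rewrite sumr_const card_ord -[_ *+ n]mulr_natr -mulrA ler_piMr ?(ltW r0) //.
  by rewrite mulrC ler_pdivrMr ?ltr0n // mul1r ler_nat.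
rewrite /ball /= distrC (le_lt_trans (fC x (le_trans xr r1))) //.
rewrite (@le_lt_trans _ _ (C * (e / (C + 1)))) ?ler_wpM2l ?(le_trans xr) //.
by rewrite mulrA ltr_pdivrMr ?ltr_wpDl // mulrC ltr_pM2l // ltrDl.
Qed.

Lemma l1norm_continuous : continuous l1norm.
Proof.
move=> x0; apply: (@l1norm_lipschitz_continuous _ _ 1) => // x _.
by rewrite mul1r ler_l1norm_dist.
Qed.

Lemma sqnorm_dist_continuous p : continuous (fun x => sqnorm (p - x)).
Proof.
move=> x0; apply: (@l1norm_lipschitz_continuous _ _ (2 * l1norm (p - x0) + 1)).
  by rewrite addr_ge0 ?mulr_ge0 ?l1norm_ge0.
move=> x x1; rewrite /sqnorm -sumrB [l1norm (x - x0)]/l1norm mulr_sumr.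
apply: (le_trans (ler_norm_sum _ _ _)); apply: ler_sum => k _.
have := ler_cmod_dist ((p - x) ord0 k) ((p - x0) ord0 k).
have -> : (p - x) ord0 k - (p - x0) ord0 k = - (x - x0) ord0 k by rewrite !mxE; ring.
move: (le_trans (ler_coord_l1norm (x - x0) k) x1) (ler_coord_l1norm (p - x0) k).
move: (cmod_ge0 ((p - x) ord0 k)) (cmod_ge0 ((p - x0) ord0 k)) (cmod_ge0 ((x - x0) ord0 k)).
rewrite cmodN; set a := cmod ((p - x) ord0 k); set b := cmod ((p - x0) ord0 k).
set c := cmod ((x - x0) ord0 k) => a0 b0 c0 c1 bl /[!ler_norml] /andP[ab1 ab2].
have e1 : 0 <= (c - (a - b)) * (a + b) by apply: mulr_ge0; lra.
have e2 : 0 <= (c + (a - b)) * (a + b) by apply: mulr_ge0; lra.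
have e3 : 0 <= c * (2 * b + 1 - (a + b)) by apply: mulr_ge0; lra.
have e4 : 0 <= c * (l1norm (p - x0) - b) by apply: mulr_ge0; lra.
rewrite !expr2; apply/andP; split; nra.
Qed.

Lemma cmod_hinner_continuous y : continuous (fun x => cmod (hinner x y)).
Proof.
move=> x0; apply: (@l1norm_lipschitz_continuous _ _ (l1norm y) (l1norm_ge0 y)) => x _.
by rewrite mulrC (le_trans (ler_cmod_dist _ _)) // -hinnerBl ler_cmod_hinner.
Qed.

Lemma closed_sublevel (f : 'rV[R[i]]_n -> R) r :
  continuous f -> closed [set x | f x <= r].
Proof.
move=> f_cont; apply: (@preimage_closed _ _ f [set t | t <= r]); last exact: closed_le.
by move=> x _; exact: f_cont.
Qed.

Lemma closed_superlevel (f : 'rV[R[i]]_n -> R) r :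
  continuous f -> closed [set x | r <= f x].
Proof.
move=> f_cont; apply: (@preimage_closed _ _ f [set t | r <= t]); last exact: closed_ge.
by move=> x _; exact: f_cont.
Qed.

Definition csquare (r : R) : set R[i] :=
  [set p.1 +i* p.2 | p in `[- r, r] `*` `[- r, r]].

Lemma compact_csquare (r : R) : compact (csquare r).
Proof.
apply: continuous_compact; last by apply: compact_setX; exact: segment_compact.
apply: continuous_subspaceT => -[a b] P /nbhs_ballP [e e0 eP].
have [r' er'] : exists r', e = r'%:C.
  by move: e0 => /=; rewrite ltcE; case: (e) => r' ? /= /andP[/eqP -> _]; exists r'.
move: e0 eP; rewrite er' /= ltcR => e0 eP; exists (ball a (r' / 2), ball b (r' / 2)).
  by split; apply: nbhsx_ballx; rewrite divr_gt0.
case=> a' b' [/= aa' bb']; apply: eP; rewrite /ball /= normc_def ltcR -cmodE.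
rewrite (le_lt_trans (ler_cmod_Complex (a - a') (b - b'))) // [r' in _ < r']splitr.
by rewrite ltrD.
Qed.

Lemma compact_l1ball (r : R) : compact [set x : 'rV[R[i]]_n | l1norm x <= r].
Proof.
apply: (@subclosed_compact _ _ [set x : 'rV[R[i]]_n | forall k, csquare r (x ord0 k)]).
- exact: closed_sublevel l1norm_continuous.
- exact: (@rV_compact _ n (fun=> csquare r) (fun=> compact_csquare r)).
move=> x /= xr k.
exists (complex.Re (x ord0 k), complex.Im (x ord0 k)); last by case: (x ord0 k).
split; rewrite /= in_itv /= -ler_norml.
  exact: le_trans (ler_Re_cmod _) (le_trans (ler_coord_l1norm _ _) xr).
exact: le_trans (ler_Im_cmod _) (le_trans (ler_coord_l1norm _ _) xr).
Qed.

End L1Norm.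

Section NormFacts.
Context {R : realType} {n : nat} {nrm : 'rV[R[i]]_n -> R}.
Hypothesis nrm_norm : is_cnorm nrm.
Implicit Types x y : 'rV[R[i]]_n.

Lemma nrm_ge0 x : 0 <= nrm x. Proof. by case: nrm_norm. Qed.

Lemma nrm_eq0 x : nrm x = 0 -> x = 0. Proof. by case: nrm_norm => _ + _ _; apply. Qed.

Lemma nrmZ l x : nrm (l *: x) = cmod l * nrm x. Proof. by case: nrm_norm. Qed.

Lemma ler_nrmD x y : nrm (x + y) <= nrm x + nrm y. Proof. by case: nrm_norm. Qed.

Lemma nrm0 : nrm 0 = 0.
Proof. by rewrite -(scale0r 0) nrmZ cmod0 mul0r. Qed.

Lemma nrmN x : nrm (- x) = nrm x.
Proof. by rewrite -scaleN1r nrmZ cmodN cmod1 mul1r. Qed.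

Lemma ler_nrm_dist x y : `|nrm x - nrm y| <= nrm (x - y).
Proof.
have nrmBl u v : nrm u - nrm v <= nrm (u - v).
  by rewrite lerBlDr (le_trans _ (ler_nrmD _ _)) // subrK.
by rewrite ler_norml nrmBl andbT lerNl opprB -[nrm (x - y)]nrmN opprB nrmBl.
Qed.

Lemma nrm_l1norm_bounded : exists2 C, 0 <= C & forall x, nrm x <= C * l1norm x.
Proof.
exists (\sum_(k < n) nrm (delta_mx 0 k)); first by apply: sumr_ge0 => k _; exact: nrm_ge0.
move=> x; rewrite {1}[x]row_sum_delta /l1norm mulr_sumr.
elim/big_ind2: _ => [|a b c d ba dc|k _]; first by rewrite nrm0.
  exact: le_trans (ler_nrmD _ _) (lerD ba dc).
rewrite nrmZ mulrC ler_wpM2r ?cmod_ge0 //.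
by rewrite (bigD1 k) //= lerDl; apply: sumr_ge0 => j _; exact: nrm_ge0.
Qed.

Lemma nrm_continuous : continuous nrm.
Proof.
have [C C0 nrmC] := nrm_l1norm_bounded.
move=> x0; apply: (@l1norm_lipschitz_continuous _ _ _ _ C C0) => x _.
exact: le_trans (ler_nrm_dist _ _) (nrmC _).
Qed.

Lemma nrm_compact_bounded (K : set 'rV[R[i]]_n) :
  compact K -> exists2 M, 0 <= M & forall z, K z -> nrm z <= M.
Proof.
move=> K_compact.
have [M [_ KM]] := compact_bounded
  (continuous_compact (continuous_subspaceT nrm_continuous) K_compact).
exists (`|M| + 1) => [|z Kz]; first by rewrite addr_ge0.
apply: le_trans (ler_norm _) (KM _ _ _ (ex_intro2 _ _ z Kz erefl)).
by rewrite (le_lt_trans (ler_norm M)) // ltrDl.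
Qed.

End NormFacts.

Lemma linear_le_quadratic_le0 {R : realFieldType} {t L : R} : 0 <= L ->
  (forall s, 0 < s -> s <= 1 -> 2 * s * t <= s ^+ 2 * L) -> t <= 0.
Proof.
move=> L0 tL; rewrite leNgt; apply/negP => t0.
pose s := Num.min 1 (t / (L + 1)).
have s0 : 0 < s by rewrite lt_min ltr01 divr_gt0 // ltr_wpDl.
have s1 : s <= 1 by rewrite ge_min lexx.
have sLt : s * (L + 1) <= t by rewrite -ler_pdivlMr ?ltr_wpDl // ge_min lexx orbT.
have := tL s s0 s1; rewrite expr2 => stL.
have : 2 * t <= s * L by nra.
nra.
Qed.

Lemma nearest_point_rdot {R : realType} {n : nat} (C : set 'rV[R[i]]_n)
    (p q b : 'rV[R[i]]_n) :
  (forall b c s, C b -> C c -> 0 < s -> s <= 1 -> C (b + s%:C *: (c - b))) ->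
  C q -> (forall b, C b -> sqnorm (p - q) <= sqnorm (p - b)) ->
  C b -> rdot b (p - q) <= rdot q (p - q).
Proof.
move=> C_convex Cq q_nearest Cb; rewrite -subr_le0 -rdotNl -rdotDl.
apply: (linear_le_quadratic_le0 (sqnorm_ge0 (b - q))) => s s0 s1.
have := q_nearest _ (C_convex _ _ _ Cq Cb s0 s1).
have -> : p - (q + s%:C *: (b - q)) = (p - q) - s%:C *: (b - q) by rewrite opprD addrA.
rewrite sqnormBZ; lra.
Qed.

Definition dual_unit_ball {R : realType} {n : nat} (nrm : 'rV[R[i]]_n -> R) :
  set 'rV[R[i]]_n := [set y | forall x, cmod (hinner x y) <= nrm x].

Section DualVectors.
Context {R : realType} {n : nat} {nrm : 'rV[R[i]]_n -> R}.
Hypothesis nrm_norm : is_cnorm nrm.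
Implicit Types x y z b : 'rV[R[i]]_n.

Lemma nrm_ball_convex b c (s : R) : nrm b <= 1 -> nrm c <= 1 -> 0 < s -> s <= 1 ->
  nrm (b + s%:C *: (c - b)) <= 1.
Proof.
move=> b1 c1 s0 s1.
have -> : b + s%:C *: (c - b) = (1 - s)%:C *: b + s%:C *: c.
  by apply/rowP => k; rewrite !mxE rmorphB /=; ring.
rewrite (le_trans (ler_nrmD nrm_norm _ _)) // !(nrmZ nrm_norm) !cmodR.
rewrite !ger0_norm ?subr_ge0 ?(ltW s0) //.
have := nrm_ge0 nrm_norm b; have := nrm_ge0 nrm_norm c; nra.
Qed.

Lemma exists_nearest_nrm_ball p :
  exists2 q, nrm q <= 1 & forall b, nrm b <= 1 -> sqnorm (p - q) <= sqnorm (p - b).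
Proof.
pose C := [set b | nrm b <= 1] `&` [set b | sqnorm (p - b) <= sqnorm p].
have C_compact : compact C.
  apply: (subclosed_compact _ (compact_l1ball (l1norm p + n%:R * (1 + sqnorm p)))).
    apply: closedI; first exact: closed_sublevel (nrm_continuous nrm_norm).
    exact: closed_sublevel (sqnorm_dist_continuous p).
  move=> b [/= _ pb]; rewrite -[b](subKr p) (le_trans (ler_l1normD _ _)) // l1normN.
  by rewrite lerD2l (le_trans (ler_l1norm_sqnorm _)) // ler_wpM2l // lerD2l.
have C0 : C !=set0 by exists 0; split; rewrite /= ?(nrm0 nrm_norm) ?subr0.
have [q] := compact_EVT_min C0 C_compact (continuous_subspaceT (sqnorm_dist_continuous p)).
rewrite inE => -[/= q1 pq] q_min; exists q => // b b1.
have [pb|pb] := leP (sqnorm (p - b)) (sqnorm p); first by apply: q_min; rewrite inE.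
exact: le_trans pq (ltW pb).
Qed.

(* Rotating [x] by the unimodular scalar [conj <x, y> / |<x, y>|] turns the modulus
   of the inner product into its real part. *)
Lemma dual_unit_ball_rdot y : (forall x, rdot x y <= nrm x) -> dual_unit_ball nrm y.
Proof.
move=> y_Re x; set h := hinner x y.
have [->|h0] := eqVneq h 0; first by rewrite cmod0 (nrm_ge0 nrm_norm).
have h_gt0 : 0 < cmod h.
  by rewrite lt_def cmod_ge0 andbT; apply: contra h0 => /eqP/cmod_eq0 ->.
pose w := h^* * (cmod h)^-1%:C.
have hw : hinner (w *: x) y = (cmod h)%:C.
  rewrite hinnerZl -/h /w mulrAC [h^* * h]mulrC mulcJ -rmorphM /=; congr (_%:C).
  by rewrite expr2 -mulrA mulfV ?mulr1 // gt_eqF.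
have := y_Re (w *: x); rewrite -Re_hinner hw /= (nrmZ nrm_norm) /w cmodM cmodJ cmodR.
by rewrite ger0_norm ?invr_ge0 ?cmod_ge0 // mulfV ?gt_eqF // mul1r.
Qed.

(* A substitute for Hahn-Banach: separate [(1 + t) z] from the unit ball of [nrm]
   by the hyperplane through its Euclidean projection [q], orthogonal to [p - q]. *)
Lemma dual_approx z (t : R) : nrm z = 1 -> 0 < t ->
  exists2 y, dual_unit_ball nrm y & (1 + t)^-1 < cmod (hinner z y).
Proof.
move=> z1 t0; pose p := (1 + t)%:C *: z.
have [q q1 q_nearest] := exists_nearest_nrm_ball p.
pose u := p - q; pose c := rdot q u.
have u_sep b : nrm b <= 1 -> rdot b u <= c.
  apply: (@nearest_point_rdot _ _ [set b | nrm b <= 1]) => //.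
  exact: nrm_ball_convex.
have pu : rdot p u = c + sqnorm u by rewrite -rdotxx /u /c rdotDl rdotNl; ring.
have pz : rdot p u = (1 + t) * rdot z u by rewrite rdotZl.
have u_gt0 : 0 < sqnorm u.
  rewrite lt_def sqnorm_ge0 andbT; apply/eqP => /sqnorm_eq0/eqP.
  rewrite subr_eq0 => /eqP pq.
  by move: q1; rewrite -pq (nrmZ nrm_norm) cmodR z1 mulr1 ger0_norm; lra.
have c_gt0 : 0 < c.
  rewrite ltNge; apply/negP => c0.
  have z_le1 : nrm z <= 1 by rewrite z1.
  by have := u_sep z z_le1; nra.
pose y := c^-1%:C *: u.
have xy x : rdot x y = c^-1 * rdot x u by rewrite rdotZr.
exists y.
  apply: dual_unit_ball_rdot => x; rewrite xy.
  have [x0|x0] := eqVneq (nrm x) 0.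
    by rewrite (nrm_eq0 nrm_norm _ x0) rdot0l mulr0 (nrm0 nrm_norm).
  have x_gt0 : 0 < nrm x by rewrite lt_def x0 (nrm_ge0 nrm_norm).
  have := u_sep ((nrm x)^-1%:C *: x); rewrite rdotZl (nrmZ nrm_norm) cmodR.
  rewrite gtr0_norm ?invr_gt0 // mulVf // => /(_ (lexx 1)).
  by rewrite !ler_pdivrMl // mulrC.
apply: lt_le_trans (le_trans (ler_norm _) (ler_Re_cmod _)); rewrite Re_hinner xy.
have t1 : 0 < 1 + t by lra.
by rewrite ltr_pdivlMl // mulrC ltr_pdivrMl // -pz pu ltrDl.
Qed.

End DualVectors.

Definition dual_net {R : realType} {n : nat} (nrm : 'rV[R[i]]_n -> R) (a : R)
    (s : seq 'rV[R[i]]_n) : Prop :=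
  (forall y, y \in s -> dual_unit_ball nrm y) /\
  (forall x, exists2 y, y \in s & a * nrm x <= cmod (hinner x y)).

Section DualNet.
Context {R : realType} {n : nat} {nrm : 'rV[R[i]]_n -> R}.
Hypothesis nrm_norm : is_cnorm nrm.
Implicit Types x y : 'rV[R[i]]_n.

(* Compactness of the l1 unit sphere reduces the covering by the open sets
   {x | a nrm x < |<x, y>|}, y in the dual unit ball, to a finite one. *)
Lemma exists_dual_net (a : R) : 0 < a -> a < 1 -> exists s, dual_net nrm a s.
Proof.
move=> a0 a1.
pose S := [set x : 'rV[R[i]]_n | l1norm x <= 1] `&` [set x | 1 <= l1norm x].
have S_compact : compact S.
  apply: (subclosed_compact _ (compact_l1ball 1)); last by move=> x [].
  apply: closedI; first exact: closed_sublevel l1norm_continuous.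
  exact: closed_superlevel l1norm_continuous.
pose U y := [set x | 0 < cmod (hinner x y) - a * nrm x].
have U_open y : dual_unit_ball nrm y -> open (U y).
  move=> _; apply: (@open_comp _ _ (fun x => cmod (hinner x y) - a * nrm x) [set t | 0 < t]);
    last exact: open_gt.
  move=> x _; apply: (@continuousB _ _ _ (fun x => cmod (hinner x y)) (fun x => a * nrm x)).
    exact: cmod_hinner_continuous.
  by apply: (@continuousM _ _ (cst a) nrm); [exact: cst_continuous | exact: nrm_continuous].
have SU : S `<=` \bigcup_(y in dual_unit_ball nrm) U y.
  move=> x [/= x1 x1'].
  have x_gt0 : 0 < nrm x.
    rewrite lt_def (nrm_ge0 nrm_norm) andbT; apply/eqP => /(nrm_eq0 nrm_norm) x0.
    by move: x1'; rewrite x0 /l1norm big1 ?ler10 // => k _; rewrite mxE cmod0.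
  have z1 : nrm ((nrm x)^-1%:C *: x) = 1.
    by rewrite (nrmZ nrm_norm) cmodR gtr0_norm ?invr_gt0 // mulVf ?gt_eqF.
  have [|y y_dual xy] := dual_approx nrm_norm _ (1 - a) z1; first lra.
  move: xy; rewrite hinnerZl cmodM cmodR gtr0_norm ?invr_gt0 // ltr_pdivlMl // => xy.
  exists y => //; rewrite /U /= subr_gt0; apply: le_lt_trans xy.
  rewrite mulrC ler_wpM2l ?(ltW x_gt0) // -[X in _ <= X]mul1r ler_pdivlMr; last lra.
  nra.
rewrite compact_cover in S_compact; have [D' D'_dual SD'] := S_compact _ _ U U_open SU.
exists (0 :: finmap.enum_fset D'); split.
  move=> y; rewrite inE => /orP[/eqP -> x | yD'].
    by rewrite hinner0r cmod0 (nrm_ge0 nrm_norm).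
  by have := D'_dual y yD'; rewrite inE.
move=> x; have [->|x0] := eqVneq x 0.
  by exists 0; rewrite ?mem_head // (nrm0 nrm_norm) mulr0 cmod_ge0.
have x_gt0 : 0 < l1norm x.
  by rewrite lt_def l1norm_ge0 andbT; apply: contra x0 => /eqP/l1norm_eq0 ->.
pose x' := (l1norm x)^-1%:C *: x.
have x'1 : l1norm x' = 1 by rewrite /x' l1normZ cmodR gtr0_norm ?invr_gt0 // mulVf ?gt_eqF.
have [|y yD' xy] := SD' x'; first by split; rewrite /= x'1.
exists y; first by rewrite inE yD' orbT.
move: xy; rewrite /U /= subr_gt0 /x' hinnerZl (nrmZ nrm_norm) cmodM cmodR.
by rewrite gtr0_norm ?invr_gt0 // mulrCA ltr_pM2l ?invr_gt0 // => /ltW.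
Qed.

End DualNet.

Section PowerInequalities.
Context {R : realFieldType}.
Implicit Types (x a b l mu al be : R) (m : nat).

Lemma bernoulli_ineq x m : 0 <= x -> 1 + m%:R * x <= (1 + x) ^+ m.
Proof.
move=> x0; elim: m => [|m IH]; first by rewrite mul0r addr0 expr0.
have x1 : 0 <= 1 + x by lra.
have := ler_wpM2l x1 IH; rewrite exprS -natr1.
have : 0 <= m%:R * x * x by rewrite !mulr_ge0.
nra.
Qed.

Lemma exprn_convex l mu a b m : 0 <= l -> 0 <= mu -> l + mu = 1 -> 0 <= a -> 0 <= b ->
  (l * a + mu * b) ^+ m <= l * a ^+ m + mu * b ^+ m.
Proof.
move=> l0 mu0 lmu a0 b0; elim: m => [|m IH]; first by rewrite !expr0 !mulr1 lmu.
have s0 : 0 <= l * a + mu * b by rewrite addr_ge0 ?mulr_ge0.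
rewrite exprS mulrC (le_trans (ler_wpM2r s0 IH)) //.
(* Chebyshev: [a ^+ m] and [a] are similarly ordered. *)
have same_sign : 0 <= (a ^+ m - b ^+ m) * (a - b).
  have [ab|ba] := leP a b.
    by rewrite mulr_le0 // subr_le0 // lerXn2r.
  by rewrite mulr_ge0 // subr_ge0 ?lerXn2r // ltW.
have := mulr_ge0 (mulr_ge0 l0 mu0) same_sign.
have -> : l * a ^+ m.+1 + mu * b ^+ m.+1 = (l * a ^+ m + mu * b ^+ m) * (l * a + mu * b)
    + l * mu * ((a ^+ m - b ^+ m) * (a - b)).
  have -> : mu = 1 - l by lra.
  by rewrite !exprS; ring.
lra.
Qed.

Lemma exprnD_convex al be a b m : 0 < al -> 0 < be -> 0 <= a -> 0 <= b ->
  (a + b) ^+ m <= (al + be) ^+ m *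
    (al / (al + be) * (a / al) ^+ m + be / (al + be) * (b / be) ^+ m).
Proof.
move=> al0 be0 a0 b0; have albe : 0 < al + be by lra.
have -> : a + b = (al + be) * (al / (al + be) * (a / al) + be / (al + be) * (b / be)).
  by field; rewrite !gt_eqF.
rewrite exprMn ler_wpM2l ?exprn_ge0 ?(ltW albe) //.
rewrite exprn_convex ?divr_ge0 ?(ltW al0) ?(ltW be0) ?(ltW albe) //.
by field; rewrite gt_eqF.
Qed.

Lemma net_size_bound (N k d : nat) : (N * k.+1 <= d)%N ->
  N%:R * (k.+1%:R / k.+2%:R) ^+ (2 * d) <= 1 :> R.
Proof.
move=> Nd; pose x : R := k.+1%:R^-1.
have k1 : 0 < k.+1%:R :> R by rewrite ltr0n.
have xa : (1 + x) * (k.+1%:R / k.+2%:R) = 1.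
  by rewrite /x -addn1 natrD; field; rewrite gt_eqF //; lra.
have x0 : 0 <= x by rewrite invr_ge0 ltW.
have Nx : N%:R <= (1 + x) ^+ (2 * d).
  apply: le_trans (bernoulli_ineq x (2 * d) x0); apply: ler_wpDl => //.
  by rewrite ler_pdivlMr // -natrM ler_nat; lia.
have a0 : 0 <= k.+1%:R / k.+2%:R :> R by rewrite divr_ge0.
by apply: le_trans (ler_wpM2r (exprn_ge0 _ a0) Nx) _; rewrite -exprMn xa expr1n.
Qed.

End PowerInequalities.

Section PowerSum.
Context {R : realType} {n N : nat} (w : 'I_N -> R) (y : 'I_N -> 'rV[R[i]]_n) (d : nat).
Hypotheses (w_ge0 : forall i, 0 <= w i) (d_gt0 : (0 < d)%N).
Local Notation p := (2 * d)%N.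
Local Notation F := (Fsum w y d).
Local Notation nr := (nroot w y d).
Implicit Types u v z : 'rV[R[i]]_n.

Let p_gt0 : (0 < p)%N. Proof. by rewrite muln_gt0. Qed.

Lemma Fsum_ge0 z : 0 <= F z.
Proof. by apply: sumr_ge0 => i _; rewrite mulr_ge0 ?exprn_ge0 ?cmod_ge0. Qed.

Lemma FsumZ l z : F (l *: z) = cmod l ^+ p * F z.
Proof.
by rewrite /Fsum mulr_sumr; apply: eq_bigr => i _; rewrite hinnerZl cmodM exprMn mulrCA.
Qed.

Lemma nroot_ge0 z : 0 <= nr z.
Proof. exact: powR_ge0. Qed.

Lemma nrootK z : nr z ^+ p = F z.
Proof.
rewrite /nroot -powR_mulrn ?powR_ge0 // -powRrM mulVf ?powRr1 ?Fsum_ge0 //.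
by rewrite pnatr_eq0 -lt0n p_gt0.
Qed.

Lemma ler_nroot z c : 0 <= c -> (nr z <= c) = (F z <= c ^+ p).
Proof. by move=> c0; rewrite -nrootK (@ler_pXn2r _ p) ?p_gt0 ?nnegrE ?nroot_ge0. Qed.

Lemma ger_nroot z c : 0 <= c -> (c <= nr z) = (c ^+ p <= F z).
Proof. by move=> c0; rewrite -nrootK (@ler_pXn2r _ p) ?p_gt0 ?nnegrE ?nroot_ge0. Qed.

Lemma nrootZ l z : nr (l *: z) = cmod l * nr z.
Proof.
apply/eqP; rewrite -(@eqrXn2 _ p) ?p_gt0 ?nroot_ge0 ?mulr_ge0 ?cmod_ge0 ?nroot_ge0 //.
by rewrite exprMn !nrootK FsumZ.
Qed.

Lemma Fsum_addr_le u v al be : 0 < al -> 0 < be ->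
  F u <= al ^+ p -> F v <= be ^+ p -> F (u + v) <= (al + be) ^+ p.
Proof.
move=> al0 be0 Fu Fv; have albe : 0 < al + be by lra.
set l := al / (al + be); set mu := be / (al + be).
apply: (@le_trans _ _ ((al + be) ^+ p * (l * (F u / al ^+ p) + mu * (F v / be ^+ p)))).
  rewrite /Fsum !mulr_suml !mulr_sumr -big_split /= mulr_sumr; apply: ler_sum => i _.
  rewrite hinnerDl; set A := cmod (hinner u (y i)); set B := cmod (hinner v (y i)).
  have AB : cmod (hinner u (y i) + hinner v (y i)) ^+ p <= (A + B) ^+ p.
    by rewrite lerXn2r ?nnegrE ?addr_ge0 ?cmod_ge0 ?ler_cmodD.
  have := exprnD_convex _ _ _ _ p al0 be0 (cmod_ge0 (hinner u (y i)))
    (cmod_ge0 (hinner v (y i))).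
  rewrite !expr_div_n -/A -/B -/l -/mu => AB_convex.
  rewrite [leRHS](_ : _ = w i * ((al + be) ^+ p *
    (l * (A ^+ p / al ^+ p) + mu * (B ^+ p / be ^+ p)))); last by ring.
  by rewrite ler_wpM2l // (le_trans AB).
rewrite -[leRHS]mulr1 ler_wpM2l ?exprn_ge0 ?(ltW albe) //.
have <- : l + mu = 1 by rewrite /l /mu -mulrDl divff ?gt_eqF.
by rewrite lerD // ler_piMr ?divr_ge0 ?(ltW al0) ?(ltW be0) ?(ltW albe) ?Fsum_ge0
  ?exprn_ge0 ?(ltW al0) ?(ltW be0) // ler_pdivrMr ?exprn_gt0 // mul1r.
Qed.

Lemma ler_nrootD u v : nr (u + v) <= nr u + nr v.
Proof.
apply/ler_addgt0Pr => e e0.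
have e2 : 0 < e / 2 by rewrite divr_gt0.
have al0 : 0 < nr u + e / 2 by rewrite ltr_wpDl ?nroot_ge0.
have be0 : 0 < nr v + e / 2 by rewrite ltr_wpDl ?nroot_ge0.
have root_le z : F z <= (nr z + e / 2) ^+ p.
  by rewrite -nrootK lerXn2r ?nnegrE ?addr_ge0 ?nroot_ge0 ?(ltW e2) // lerDl ltW.
rewrite ler_nroot ?addr_ge0 ?nroot_ge0 ?(ltW e0) //.
have -> : nr u + nr v + e = (nr u + e / 2) + (nr v + e / 2).
  by rewrite [e in LHS]splitr; ring.
exact: Fsum_addr_le.
Qed.

End PowerSum.

Definition net_weights {R : realType} (N : nat) : 'I_N -> R := fun=> N%:R^-1.

Definition net_points {R : realType} {n : nat} (s : seq 'rV[R[i]]_n) :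
  'I_(size s) -> 'rV[R[i]]_n := fun i => s`_i.

Section NetNorm.
Context {R : realType} {n : nat} {nrm : 'rV[R[i]]_n -> R}.
Hypothesis nrm_norm : is_cnorm nrm.
Context {a : R} {s : seq 'rV[R[i]]_n} {d : nat}.
Hypotheses (s_net : dual_net nrm a s) (a_gt0 : 0 < a) (d_gt0 : (0 < d)%N).
Local Notation N := (size s).
Local Notation p := (2 * d)%N.
Local Notation F := (Fsum (net_weights N) (net_points s) d).
Local Notation nr := (nroot (net_weights N) (net_points s) d).
Implicit Types z : 'rV[R[i]]_n.

Lemma size_dual_net_gt0 : (0 < N)%N.
Proof.
by have [_ /(_ 0) [y + _]] := s_net; rewrite lt0n size_eq0; apply: contraL => /eqP ->.
Qed.

Lemma net_weights_gt0 i : 0 < net_weights N i :> R.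
Proof. by rewrite invr_gt0 ltr0n size_dual_net_gt0. Qed.

Let net_weights_ge0 i : 0 <= net_weights N i :> R.
Proof. exact: ltW (net_weights_gt0 i). Qed.

Lemma Fsum_net_le z : F z <= nrm z ^+ p.
Proof.
have [s_dual _] := s_net.
apply: (@le_trans _ _ (\sum_(i < N) N%:R^-1 * nrm z ^+ p)).
  apply: ler_sum => i _.
  rewrite ler_wpM2l // lerXn2r ?nnegrE ?cmod_ge0 ?(nrm_ge0 nrm_norm) //.
  by apply: s_dual; rewrite mem_nth.
rewrite sumr_const card_ord -[_ *+ N]mulr_natl mulrA mulfV ?mul1r //.
by rewrite pnatr_eq0 -lt0n size_dual_net_gt0.
Qed.

Lemma Fsum_net_ge z : N%:R^-1 * (a * nrm z) ^+ p <= F z.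
Proof.
have [_ /(_ z) [y y_s zy]] := s_net.
have ys : (index y s < N)%N by rewrite index_mem.
rewrite /Fsum (bigD1 (Ordinal ys)) //=; apply: ler_wpDr.
  by apply: sumr_ge0 => i _; rewrite mulr_ge0 ?exprn_ge0 ?cmod_ge0.
rewrite /net_points nth_index // ler_wpM2l // lerXn2r ?nnegrE ?cmod_ge0 //.
by rewrite mulr_ge0 ?(ltW a_gt0) ?(nrm_ge0 nrm_norm).
Qed.

Lemma nroot_net_le z : nr z <= nrm z.
Proof.
by rewrite (ler_nroot _ _ _ net_weights_ge0 d_gt0) ?(nrm_ge0 nrm_norm) ?Fsum_net_le.
Qed.

Lemma nroot_net_ge z (b : R) : 0 <= b -> N%:R * b ^+ p <= 1 -> b * (a * nrm z) <= nr z.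
Proof.
move=> b0 Nb.
have a_nrm0 : 0 <= a * nrm z by rewrite mulr_ge0 ?(ltW a_gt0) ?(nrm_ge0 nrm_norm).
rewrite (ger_nroot _ _ _ net_weights_ge0 d_gt0); last exact: mulr_ge0 b0 a_nrm0.
apply: le_trans (Fsum_net_ge z); rewrite exprMn ler_wpM2r ?exprn_ge0 //.
by rewrite -[leRHS]mul1r ler_pdivlMr ?ltr0n ?size_dual_net_gt0 // mulrC.
Qed.

Lemma nroot_net_cnorm : is_cnorm nr.
Proof.
split; [exact: nroot_ge0 | move=> z nz0 | exact: nrootZ | exact: ler_nrootD].
have a_nrm0 : 0 <= a * nrm z by rewrite mulr_ge0 ?(ltW a_gt0) ?(nrm_ge0 nrm_norm).
have := Fsum_net_ge z; rewrite -(nrootK _ _ _ net_weights_ge0 d_gt0) nz0.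
rewrite expr0n muln_eq0 (gtn_eqF d_gt0) /=.
rewrite pmulr_rle0 ?invr_gt0 ?ltr0n ?size_dual_net_gt0 // => az_le0.
have : (a * nrm z) ^+ p == 0 by rewrite eq_le az_le0 exprn_ge0.
by rewrite expf_eq0 mulf_eq0 (gt_eqF a_gt0) => /andP[_ /eqP/(nrm_eq0 nrm_norm)].
Qed.

Lemma nroot_net_approx (k : nat) z : a = k.+1%:R / k.+2%:R -> (N * k.+1 <= d)%N ->
  nrm z - nr z <= 2 * nrm z / k.+2%:R.
Proof.
move=> ak Nd; have Na : N%:R * a ^+ p <= 1 by rewrite ak net_size_bound.
have := nroot_net_ge z a (ltW a_gt0) Na.
have -> : k.+2%:R^-1 = 1 - a.
  by rewrite ak -[k.+2%:R]natr1; field; rewrite gt_eqF // ltr_wpDl.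
have := mulr_ge0 (nrm_ge0 nrm_norm z) (sqr_ge0 (1 - a)).
nra.
Qed.

End NetNorm.

Definition diag_index (B : nat -> nat) (d : nat) : nat :=
  (\max_(k < d.+1 | B k <= d) k)%N.

Lemma diag_indexP (B : nat -> nat) (K d : nat) : (K <= d)%N -> (B K <= d)%N ->
  (K <= diag_index B d)%N /\ (B (diag_index B d) <= d)%N.
Proof.
move=> Kd BK; have Kd1 : (K < d.+1)%N by rewrite ltnS.
split; first exact: (@leq_bigmax_cond _ _ _ (Ordinal Kd1)).
rewrite /diag_index (bigop.bigmax_eq_arg (Ordinal Kd1)) //.
by case: arg_maxnP.
Qed.

Theorem theorem4p5 (R : realType) (n : nat) (nrm : 'rV[R[i]]_n -> R) :
  is_cnorm nrm ->
  exists (N : nat -> nat)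
         (w : forall d : nat, 'I_(N d) -> R)
         (y : forall d : nat, 'I_(N d) -> 'rV[R[i]]_n),
    (forall d, (0 < d)%N -> forall i, 0 < w d i) /\
    (forall d, (0 < d)%N -> is_cnorm (nroot (w d) (y d) d)) /\
    (forall d, (0 < d)%N -> forall z, nroot (w d) (y d) d z <= nrm z) /\
    (forall K : set 'rV[R[i]]_n, compact K ->
       forall eps : R, 0 < eps ->
       exists D : nat, forall d, (D <= d)%N -> (0 < d)%N ->
         forall z, K z -> `|nroot (w d) (y d) d z - nrm z| < eps).
Proof.
move=> nrm_norm; pose a (k : nat) : R := k.+1%:R / k.+2%:R.
have a_gt0 k : 0 < a k by rewrite divr_gt0.
have net k : exists s, dual_net nrm (a k) s.
  by apply: exists_dual_net => //; rewrite ltr_pdivrMr // mul1r ltr_nat.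
have [s s_net] := choice net.
pose B k := (size (s k) * k.+1)%N; pose sched d := diag_index B d.
exists (fun d => size (s (sched d))), (fun d => net_weights _),
  (fun d => net_points (s (sched d))).
split=> [d _|]; first exact: net_weights_gt0 (s_net (sched d)).
split=> [d d_gt0|]; first exact (nroot_net_cnorm nrm_norm (s_net _) (a_gt0 _) d_gt0).
split=> [d d_gt0 z|K K_compact eps eps_gt0].
  exact (nroot_net_le nrm_norm (s_net _) d_gt0 z).
have [M M0 KM] := nrm_compact_bounded nrm_norm K K_compact.
pose K0 := Num.truncn (2 * M / eps).
exists (maxn K0 (B K0)) => d; rewrite geq_max => /andP[K0d BK0d] d_gt0 z Kz.
have [K0k Bk] := diag_indexP _ _ _ K0d BK0d; set k := diag_index B d in K0k Bk.
have nr_le := nroot_net_le nrm_norm (s_net k) d_gt0 z.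
have nr_approx := nroot_net_approx nrm_norm (s_net k) (a_gt0 k) d_gt0 k z erefl Bk.
rewrite ler0_norm ?subr_le0 // opprB (le_lt_trans nr_approx) //.
have k2 : 0 < k.+2%:R :> R by rewrite ltr0n.
rewrite ltr_pdivrMr // (@le_lt_trans _ _ (2 * M)) ?ler_wpM2l ?KM //.
rewrite -ltr_pdivrMl // mulrC (lt_le_trans (truncnS_gt _)) // ler_nat.
by rewrite /K0 ltnS; apply: leq_trans K0k _.
Qed.
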